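(* Let $G$ be a finite, simple, connected graph and let $C$ be a cycle of length $l \geq 3$ in $G$. Let $W^+(G)$ be the graph obtained from $G$ by adding a new vertex $x$ and joining $x$ by an edge to every vertex of $C$. Then $$\chi_{dd}(G)-l \leq \chi_{dd}(W^+(G)) \leq \chi_{dd}(G) + 1.$$
   Context: All graphs are finite, undirected and simple. For a vertex $w$, $N(w)$ is its open neighborhood and $N[w]=N(w)\cup\{w\}$ its closed neighborhood. A vertex $w$ dominates a set $S$ of vertices if $S \subseteq N[w]$. A domination coloring of a graph $H$ is a proper vertex coloring of $H$ (adjacent vertices receive different colors; a color class is the set of all vertices receiving a given color) such that every vertex of $H$ dominates at least one color class (possibly its own class), and every color class is dominated by at least one vertex of $H$. The domination chromatic number $\chi_{dd}(H)$ is the minimum number of color classes in a domination coloring of $H$. *)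

From mathcomp Require Import all_boot.
Set Implicit Arguments. Unset Strict Implicit. Unset Printing Implicit Defensive.

Section DomColoring.
Variable T : finType.
Variable e : rel T.

Definition cnbhd (w : T) : {set T} := [set v | (v == w) || e w v].

Definition dominates (w : T) (A : {set T}) : bool := A \subset cnbhd w.

Definition independent (A : {set T}) : bool :=
  [forall u in A, forall v in A, ~~ e u v].

Definition dom_coloring (P : {set {set T}}) : bool :=
  [&& partition P [set: T],
      [forall A in P, independent A],
      [forall w, exists A in P, dominates w A] &
      [forall A in P, exists w, dominates w A]].

(* minimum number of color classes of a domination coloring; the default
   #|T| is attained by the coloring with singleton classes in a simple graph *)
Definition chi_dd : nat :=
  \big[minn/#|T|]_(P : {set {set T}} | dom_coloring P) #|P|.
End DomColoring.

Definition simple_graph (T : finType) (e : rel T) : Prop :=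
  symmetric e /\ irreflexive e.

Definition connected_graph (T : finType) (e : rel T) : Prop :=
  forall u v, connect e u v.

Definition is_graph_cycle (T : finType) (e : rel T) (c : seq T) : Prop :=
  [/\ uniq c, 3 <= size c & cycle e c].

(* W^+(G): new vertex x = None joined to every vertex of the cycle c *)
Definition wplus (T : finType) (e : rel T) (c : seq T) : rel (option T) :=
  fun a b => match a, b with
             | Some u, Some v => e u v
             | None, Some v => v \in c
             | Some u, None => u \in c
             | None, None => false
             end.

From mathcomp Require Import all_boot.

Set Implicit Arguments. Unset Strict Implicit. Unset Printing Implicit Defensive.

(* A domination coloring P of G yields one of W^+(G) by adding the class {x}:
   x dominates {x}, and the old classes and dominations are untouched.
   Conversely, from a domination coloring Q of W^+(G), delete x and split off
   the l cycle vertices as singleton classes.  What remains of each class is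
   still dominated by a vertex of G, since a dominator of a class meeting
   V(G) \ V(C) cannot be x; and a vertex w off the cycle dominates a class A
   of Q not containing x (x is not adjacent to w), so w dominates either the
   trace of A off the cycle or, if that trace is empty, a singleton {v} with
   v in A on the cycle.  This costs at most l extra classes. *)

Lemma bigminn_le (I : finType) (P : pred I) (F : I -> nat) (x0 : nat) (i : I) :
  P i -> \big[minn/x0]_(j | P j) F j <= F i.
Proof.
move=> Pi; have : i \in index_enum I by rewrite mem_index_enum.
elim: (index_enum I) => // j r IHr; rewrite inE big_cons => /predU1P[<-|ri].
  by rewrite Pi geq_minl.
by case: ifP => _; [apply: leq_trans (geq_minr _ _) _|]; exact: IHr.
Qed.

Lemma card_partition_le (T : finType) (P : {set {set T}}) (D : {set T}) :
  partition P D -> #|P| <= #|D|.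
Proof.
move=> partP; rewrite (card_partition partP) -sum1_card.
by apply: leq_sum => A PA; rewrite card_gt0 (partition_neq0 partP PA).
Qed.

Lemma partition_setT (T : finType) (P : {set {set T}}) :
  set0 \notin P -> (forall x, exists2 A, A \in P & x \in A) ->
  (forall A B x, A \in P -> B \in P -> x \in A -> x \in B -> A = B) ->
  partition P [set: T].
Proof.
move=> P_neq0 P_cover P_disj; apply/and3P; split => //.
- apply/eqP/setP => x; rewrite inE; apply/bigcupP.
  by have [A PA xA] := P_cover x; exists A.
- apply/trivIsetP => A B PA PB neqAB; apply/pred0P => x /=.
  by apply/andP => -[xA xB]; move/eqP: neqAB; apply; apply: (P_disj _ _ x).
Qed.

Section DominationColorings.
Variables (T : finType) (e : rel T).

Lemma independentP (A : {set T}) :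
  reflect {in A &, forall u v, ~~ e u v} (independent e A).
Proof.
apply: (iffP forall_inP) => [indA u v uA vA | indA u uA].
  by move/forall_inP/(_ v vA): (indA u uA).
by apply/forall_inP => v vA; apply: indA.
Qed.

Lemma independent1 (u : T) : irreflexive e -> independent e [set u].
Proof.
by move=> irr_e; apply/independentP => x y /set1P-> /set1P->; rewrite irr_e.
Qed.

Lemma dominates1 (w : T) : dominates e w [set w].
Proof. by rewrite /dominates sub1set inE eqxx. Qed.

Lemma dom_coloringP (P : {set {set T}}) :
  reflect [/\ partition P [set: T], {in P, forall A, independent e A},
              (forall w, exists2 A, A \in P & dominates e w A) &
              {in P, forall A, exists w, dominates e w A}]
          (dom_coloring e P).
Proof.
apply: (iffP and4P) => -[partP indP domw domA]; split => //.
- exact/forall_inP.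
- by move=> w; have /exists_inP[A] := forallP domw w; exists A.
- by move=> A /(forall_inP domA)/existsP.
- exact/forall_inP.
- by apply/forallP => w; have [A PA wA] := domw w; apply/exists_inP; exists A.
- by apply/forall_inP => A /domA /existsP.
Qed.

Lemma chi_dd_le_coloring (P : {set {set T}}) :
  dom_coloring e P -> chi_dd e <= #|P|.
Proof. exact: bigminn_le. Qed.

Lemma chi_dd_le_card : chi_dd e <= #|T|.
Proof.
apply: (big_ind (fun n => n <= #|T|)) => // [m n|P /and4P[partP _ _ _]].
  by move=> le_m _; apply: leq_trans (geq_minl _ _) le_m.
by rewrite -cardsT card_partition_le.
Qed.

End DominationColorings.

Lemma chi_dd_le_transfer (T T' : finType) (e : rel T) (e' : rel T') (k : nat) :
  #|T'| <= #|T| + k ->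
  (forall P, dom_coloring e P ->
     exists2 P', dom_coloring e' P' & #|P'| <= #|P| + k) ->
  chi_dd e' <= chi_dd e + k.
Proof.
move=> le_card transfer; apply: (big_ind (fun n => chi_dd e' <= n + k)).
- exact: leq_trans (chi_dd_le_card e') le_card.
- by move=> m n; rewrite /minn; case: ifP.
- move=> P /transfer[P' /chi_dd_le_coloring le_P' le_card_P'].
  exact: leq_trans le_P' le_card_P'.
Qed.

Section WPlus.
Variables (T : finType) (e : rel T) (c : seq T).
Local Notation W := (wplus e c).

Lemma dominates_wplus_Some (w : T) (A : {set T}) :
  dominates W (Some w) (Some @: A) = dominates e w A.
Proof.
by rewrite /dominates sub_imset_pre; apply: eq_subset_r => v; rewrite !inE.
Qed.

Definition wplus_extend (P : {set {set T}}) : {set {set option T}} :=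
  [set None] |: [set Some @: (A : {set T}) | A in P].

Lemma card_wplus_extend (P : {set {set T}}) : #|wplus_extend P| <= #|P| + 1.
Proof. by rewrite cardsU1 addnC leq_add ?leq_b1 ?leq_imset_card. Qed.

Lemma wplus_extend_dom_coloring (P : {set {set T}}) :
  dom_coloring e P -> dom_coloring W (wplus_extend P).
Proof.
case/dom_coloringP => partP indP domw domA; apply/dom_coloringP; split.
- have -> : [set: option T] = [set None] :|: Some @: [set: T].
    by apply/setP => -[v|]; rewrite !inE ?imset_f.
  apply: partitionU1.
  + by rewrite imset_partition //; apply: Some_inj.
  + by apply/set0Pn; exists None; rewrite inE.
  + by rewrite disjoints1; apply/imsetP => -[].
- move=> _ /setU1P[-> | /imsetP[A PA ->]].
    by apply/independentP => _ _ /set1P-> /set1P->.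
  apply/independentP => _ _ /imsetP[u uA ->] /imsetP[v vA ->].
  exact: (independentP _ _ (indP A PA)).
- case=> [w|]; last by exists [set None]; rewrite ?setU11 ?dominates1.
  have [A PA wA] := domw w; exists (Some @: A).
    by rewrite setU1r ?imset_f.
  by rewrite dominates_wplus_Some.
- move=> _ /setU1P[-> | /imsetP[A PA ->]].
    by exists None; apply: dominates1.
  by have [w wA] := domA A PA; exists (Some w); rewrite dominates_wplus_Some.
Qed.

Definition wplus_trace (A : {set option T}) : {set T} :=
  [set v | (Some v \in A) && (v \notin c)].

Definition wplus_restrict (Q : {set {set option T}}) : {set {set T}} :=
  ([set wplus_trace A | A in Q] :\ set0) :|: [set [set v] | v in c].

Lemma mem_wplus_restrict_trace (Q : {set {set option T}}) (A : {set option T}) :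
  A \in Q -> wplus_trace A != set0 -> wplus_trace A \in wplus_restrict Q.
Proof. by move=> QA n0; rewrite in_setU in_setD1 n0 imset_f. Qed.

Lemma mem_wplus_restrict1 (Q : {set {set option T}}) (u : T) :
  u \in c -> [set u] \in wplus_restrict Q.
Proof. by move=> uc; rewrite in_setU imset_f ?orbT. Qed.

Lemma card_wplus_restrict (Q : {set {set option T}}) :
  #|wplus_restrict Q| <= #|Q| + size c.
Proof.
apply: leq_trans (leq_card_setU _ _) (leq_add _ _).
- exact: leq_trans (subset_leq_card (subD1set _ _)) (leq_imset_card _ _).
- exact: leq_trans (leq_imset_card _ _) (card_size c).
Qed.

Lemma independent_wplus_trace (A : {set option T}) :
  independent W A -> independent e (wplus_trace A).
Proof.
move/independentP => indA; apply/independentP => u v.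
by rewrite !inE => /andP[uA _] /andP[vA _]; apply: (indA _ _ uA vA).
Qed.

Lemma dominates_wplus_trace (w : T) (A : {set option T}) :
  dominates W (Some w) A -> dominates e w (wplus_trace A).
Proof.
move/subsetP => domA; apply/subsetP => v; rewrite inE => /andP[/domA].
by rewrite !inE.
Qed.

Lemma wplus_trace_None (A : {set option T}) :
  dominates W None A -> wplus_trace A = set0.
Proof.
move/subsetP => domA; apply/setP => v; rewrite !inE.
by apply/andP => -[/domA]; rewrite !inE /= => ->.
Qed.

Lemma wplus_restrict_partition (Q : {set {set option T}}) :
  partition Q [set: option T] -> partition (wplus_restrict Q) [set: T].
Proof.
move=> partQ; have trivQ := partition_trivIset partQ.
apply: partition_setT.
- apply/negP => /setUP[/setD1P[/eqP] //|/imsetP[u _ /esym/eqP]].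
  by rewrite -cards_eq0 cards1.
- move=> v; case vc: (v \in c).
    by exists [set v]; rewrite ?mem_wplus_restrict1 ?set11.
  set A := pblock Q (Some v).
  have QA : A \in Q by rewrite pblock_mem // (cover_partition partQ).
  have vA : v \in wplus_trace A.
    by rewrite !inE vc mem_pblock (cover_partition partQ) inE.
  exists (wplus_trace A) => //; apply: mem_wplus_restrict_trace => //.
  by apply/set0Pn; exists v.
- move=> _ _ v /setUP[/setD1P[_ /imsetP[A QA ->]]|/imsetP[u uc ->]]
               /setUP[/setD1P[_ /imsetP[B QB ->]]|/imsetP[u' uc' ->]];
    rewrite !inE.
  + move=> /andP[vA _] /andP[vB _].
    by rewrite -(def_pblock trivQ QA vA) (def_pblock trivQ QB vB).
  + by move=> /andP[_ /negP vc] /eqP vu; rewrite vu in vc.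
  + by move=> /eqP vu /andP[_ /negP vc]; rewrite vu in vc.
  + by move=> /eqP-> /eqP->.
Qed.

Lemma wplus_restrict_dom_coloring (Q : {set {set option T}}) :
  irreflexive e -> dom_coloring W Q -> dom_coloring e (wplus_restrict Q).
Proof.
move=> irr_e /dom_coloringP[partQ indQ domw domA].
apply/dom_coloringP; split; first exact: wplus_restrict_partition.
- move=> _ /setUP[/setD1P[_ /imsetP[A QA ->]]|/imsetP[u _ ->]].
    exact/independent_wplus_trace/indQ.
  exact: independent1.
- move=> w; case wc: (w \in c).
    by exists [set w]; rewrite ?mem_wplus_restrict1 ?dominates1.
  have [A QA domwA] := domw (Some w).
  have [trace0|n0] := eqVneq (wplus_trace A) set0; last first.
    exists (wplus_trace A); first exact: mem_wplus_restrict_trace.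
    exact: dominates_wplus_trace.
  have /set0Pn[[v|] vA] := partition_neq0 partQ QA; last first.
    by move/subsetP/(_ _ vA): domwA; rewrite !inE /= wc.
  have vc : v \in c.
    by apply/negPn/negP => vc; move/setP/(_ v): trace0; rewrite !inE vA vc.
  exists [set v]; rewrite ?mem_wplus_restrict1 // /dominates sub1set.
  by move/subsetP/(_ _ vA): domwA; rewrite !inE.
- move=> B /setUP[/setD1P[n0 /imsetP[A QA defB]]|/imsetP[u _ ->]]; last first.
    by exists u; apply: dominates1.
  have [[w|] domwA] := domA A QA.
    by exists w; rewrite defB dominates_wplus_trace.
  by rewrite defB (wplus_trace_None domwA) eqxx in n0.
Qed.

End WPlus.

Theorem theorem6 (T : finType) (e : rel T) (c : seq T) :
  simple_graph e -> connected_graph e -> is_graph_cycle e c ->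
  chi_dd e - size c <= chi_dd (wplus e c) <= chi_dd e + 1.
Proof.
move=> [_ irr_e] _ _; apply/andP; split.
- rewrite leq_subLR addnC; apply: chi_dd_le_transfer => [|Q domQ].
    by rewrite card_option (leq_trans (leqnSn _)) ?leq_addr.
  exists (wplus_restrict c Q); last exact: card_wplus_restrict.
  exact: wplus_restrict_dom_coloring.
- apply: chi_dd_le_transfer => [|P domP]; first by rewrite card_option addn1.
  exists (wplus_extend P); last exact: card_wplus_extend.
  exact: wplus_extend_dom_coloring.
Qed.
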